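(* Let $\Gamma$ be a single-player extensive-form game without absentmindedness, and let $\mathscr C$ be the class of games sharing the same game tree and infoset partition as $\Gamma$ (with arbitrary nonnegative utilities). Then $\mathrm{VoR}^{\mathrm{opt}}(\mathscr C)\le\max_{h\in\mathcal H_c}\beta(h)$, where by convention this maximum is $1$ if $\mathcal H_c=\emptyset$.
   Context: A single-player extensive-form game consists of a finite rooted tree (nodes $\mathcal H$, leaves $\mathcal Z$, actions $A_h$); nonterminal nodes belong to Player 1 or to chance; $\mathcal H_c$ is the set of chance nodes, each with a fixed distribution on its actions; Player 1 has utility $u_1:\mathcal Z\to\mathbb R_{\ge0}$ and a partition of its nodes into infosets with common action sets. The game tree consists of nodes, actions and chance distributions. For a node $h$, $\mathrm{obs}(h)$ lists (player, infoset, action) along the root-to-$h$ path (excluding $h$); $\mathrm{obs}_1(h)$ restricts to Player 1. Absentmindedness: some infoset appears more than once in $\mathrm{obs}(h)$ for some $h$. $\mathrm{pr}_1(\Gamma)$ has the same tree and utilities with each infoset partitioned into classes of $h\sim h'\iff\mathrm{obs}_1(h)=\mathrm{obs}_1(h')$. $u_1(\mathrm{opt}(\cdot))$ is the maximum expected utility over behavioral strategies; $\mathrm{VoR}^{\mathrm{opt}}(\Gamma)=u_1(\mathrm{opt}(\mathrm{pr}_1(\Gamma)))/u_1(\mathrm{opt}(\Gamma))$; $\mathrm{VoR}^{\mathrm{opt}}(\mathscr C)=\sup_{\Gamma'\in\mathscr C}\mathrm{VoR}^{\mathrm{opt}}(\Gamma')$. Branching factor: for $h\in\mathcal H_c$ and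 $a\in A_h$, $H_{ha}$ is the set of chance nodes in the subtree rooted at the child of $h$ via $a$; $b_h(a)=1$ if $H_{ha}=\emptyset$, else $\max_{h'\in H_{ha}}\beta(h')$; $\beta(h)=\sum_{a\in A_h}b_h(a)$. *)

From HB Require Import structures.
From mathcomp Require Import all_boot all_order all_algebra.
From mathcomp Require Import classical_sets reals.
Import Order.TTheory GRing.Theory Num.Theory.
Local Open Scope ring_scope.
Local Open Scope classical_set_scope.

(* A single-player extensive-form game tree.
   - [Inf] is the type of (labels of) Player-1 infosets; [nact I] is the number
     of actions available at infoset [I] (common to all its nodes).
   - [Leaf] is a terminal node.
   - [Chance n p ch] is a chance node with actions 'I_n, probabilities [p],
     and children [ch].
   - [Dec J ch] is a Player-1 node belonging to infoset [J].
   A node / leaf is identified by the sequence of action indices on the path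
   from the root to it. *)
Inductive tree (R : Type) (Inf : Type) (nact : Inf -> nat) : Type :=
| Leaf
| Chance (n : nat) (p : 'I_n -> R) (ch : 'I_n -> tree R Inf nact)
| Dec (I : Inf) (ch : 'I_(nact I) -> tree R Inf nact).

Arguments Leaf {R Inf nact}.
Arguments Chance {R Inf nact} n p ch.
Arguments Dec {R Inf nact} I ch.

Set Implicit Arguments. Unset Strict Implicit. Unset Printing Implicit Defensive.

Section Game.
Variables (R : realType) (Inf : eqType) (nact : Inf -> nat).
Local Notation tree := (tree R Inf nact).

Fixpoint wf_tree (t : tree) : Prop :=
  match t with
  | Leaf => True
  | Chance n p ch =>
      (0 < n)%N /\ (forall i, 0 <= p i) /\ \sum_(i < n) p i = 1 /\
      (forall i, wf_tree (ch i))
  | Dec J ch => (0 < nact J)%N /\ (forall i, wf_tree (ch i))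
  end.

Fixpoint noAM_from (seen : seq Inf) (t : tree) : Prop :=
  match t with
  | Leaf => True
  | Chance n p ch => forall i, noAM_from seen (ch i)
  | Dec J ch => J \notin seen /\ forall i, noAM_from (J :: seen) (ch i)
  end.

Definition no_absentmindedness (t : tree) : Prop := noAM_from [::] t.

Definition behavioral (s : forall I : Inf, 'I_(nact I) -> R) : Prop :=
  forall I, (forall a, 0 <= s I a) /\ \sum_(a < nact I) s I a = 1.

(* Expected utility of Player 1 under strategy [s] and utility [u] on leaves
   (leaves identified by their root-to-leaf action sequence). [path] is the
   reversed action sequence to the current node. *)
Fixpoint EU_from (u : seq nat -> R) (s : forall I : Inf, 'I_(nact I) -> R)
    (path : seq nat) (t : tree) : R :=
  match t with
  | Leaf => u (rev path)
  | Chance n p ch => \sum_(i < n) p i * EU_from u s (nat_of_ord i :: path) (ch i)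
  | Dec J ch => \sum_(a < nact J) s J a * EU_from u s (nat_of_ord a :: path) (ch a)
  end.

Definition EU (t : tree) (u : seq nat -> R) (s : forall I : Inf, 'I_(nact I) -> R) : R :=
  EU_from u s [::] t.

(* u_1(opt(Gamma)): the optimal (supremum = maximum) expected utility over
   behavioral strategies. *)
Definition opt_value (t : tree) (u : seq nat -> R) : R :=
  sup [set x | exists s, behavioral s /\ x = EU t u s].

(* For a chance node h, beta(h) = sum_a b_h(a), with b_h(a) = 1 if the
   subtree via a has no chance node, else the max of beta over its chance
   nodes. *)
Fixpoint has_chance (t : tree) : bool :=
  match t with
  | Leaf => false
  | Chance _ _ _ => true
  | Dec J ch => [exists a, has_chance (ch a)]
  end.

Fixpoint max_beta (t : tree) : nat :=
  match t with
  | Leaf => 0%N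
  | Chance n p ch =>
      maxn (\sum_(i < n) (if has_chance (ch i) then max_beta (ch i) else 1%N))
           (\max_(i < n) max_beta (ch i))
  | Dec J ch => \max_(a < nact J) max_beta (ch a)
  end.

Definition max_branching (t : tree) : nat :=
  if has_chance t then max_beta t else 1%N.

End Game.

(* pr_1(Gamma): same tree (and same utilities, since leaves are identified by
   their action paths), with each Player-1 node relabelled by the pair
   (infoset, obs_1(h)), where obs_1(h) is the list of (infoset, action) pairs
   of Player 1 along the root-to-h path (excluding h). Two nodes are in the
   same refined infoset iff they are in the same infoset of Gamma and have
   the same obs_1. *)
Fixpoint pr1_from (R : Type) (Inf : Type) (nact : Inf -> nat)
    (hist : seq (Inf * nat)) (t : tree R Inf nact)
    : tree R (Inf * seq (Inf * nat)) (fun J => nact J.1) :=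
  match t with
  | Leaf => Leaf
  | Chance n p ch => Chance n p (fun i => pr1_from hist (ch i))
  | Dec J ch =>
      @Dec R (Inf * seq (Inf * nat)) (fun K => nact K.1) (J, hist)
        (fun a => pr1_from (rcons hist (J, nat_of_ord a)) (ch a))
  end.

Definition pr1 (R : Type) (Inf : Type) (nact : Inf -> nat) (t : tree R Inf nact) :=
  pr1_from [::] t.

From mathcomp Require Import all_boot all_order all_algebra.
From mathcomp Require Import reals boolp.
Import Order.TTheory GRing.Theory Num.Theory.
Set Implicit Arguments. Unset Strict Implicit. Unset Printing Implicit Defensive.
Local Open Scope ring_scope.

(* Fix a behavioral strategy s' of pr_1(Gamma).  Bottom-up, the value of s' at
   a node is dominated by the summed values, in Gamma, of at most
   [max_branching] behavioral strategies of Gamma.  At a leaf one strategy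
   suffices.  At a Player-1 node the refined infoset is visited only there, so
   the mixture of s' is dominated by its best action b; the strategies covering
   the b-subtree are switched to play b at this infoset, which does not change
   their value on that subtree since, without absentmindedness, the infoset
   does not recur in it.  At a chance node the families of the children are
   concatenated, whence the sum beta(h) = sum_a b_h(a).  At the root each
   strategy of the family is worth at most opt(Gamma). *)

Lemma ler_sum_summand (R : numDomainType) (I : finType) (F : I -> R) (i : I) :
  (forall j, 0 <= F j) -> F i <= \sum_j F j.
Proof. by move=> F_ge0; rewrite (bigD1 i) //= lerDl sumr_ge0. Qed.

Lemma convex_comb_le (R : numDomainType) (I : finType) (w F : I -> R) (c : R) :
  (forall i, 0 <= w i) -> \sum_i w i = 1 -> (forall i, F i <= c) ->
  \sum_i w i * F i <= c.
Proof.
move=> w_ge0 w_sum1 F_le; apply: (@le_trans _ _ (\sum_i w i * c)).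
  by apply: ler_sum => i _; rewrite ler_wpM2l.
by rewrite -big_distrl /= w_sum1 mul1r.
Qed.

Definition pure {R : realType} {n} (b : nat) (a : 'I_n) : R := (nat_of_ord a == b)%:R.

Lemma sum_pure (R : realType) n (b : 'I_n) (F : 'I_n -> R) :
  \sum_a pure b a * F a = F b.
Proof.
rewrite (bigD1 b) //= /pure eqxx mul1r big1 ?addr0 // => a.
by rewrite -(inj_eq val_inj) => /negbTE ->; rewrite mul0r.
Qed.

Lemma pure_distribution (R : realType) n (b : nat) : (b < n)%N ->
  (forall a : 'I_n, (0 : R) <= pure b a) /\ \sum_(a < n) pure b a = 1 :> R.
Proof.
move=> lt_bn; split=> [a|]; first exact: ler0n.
have /= <- := sum_pure (Ordinal lt_bn) (fun=> 1 : R).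
by apply: eq_bigr => a _; rewrite mulr1.
Qed.

Lemma behavioral_exists (R : realType) (Inf : eqType) (nact : Inf -> nat) :
  (forall I, (0 < nact I)%N) ->
  exists s : forall I : Inf, 'I_(nact I) -> R, behavioral s.
Proof.
by move=> nact_gt0; exists (fun I => pure 0); move=> I; exact: pure_distribution.
Qed.

Section Refinement.
Variables (R : realType) (Inf : eqType) (nact : Inf -> nat).
Hypothesis nact_gt0 : forall I, (0 < nact I)%N.
Variables (u : seq nat -> R).
Hypothesis u_ge0 : forall z, 0 <= u z.

Local Notation tree := (tree R Inf nact).
Local Notation strat := (forall I : Inf, 'I_(nact I) -> R).

Definition bstrat := {s : strat | behavioral s}.

Lemma EU_ge0 (s : strat) (t : tree) path :
  behavioral s -> wf_tree t -> 0 <= EU_from u s path t.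
Proof.
move=> s_beh; elim: t path => [|n p ch IH|J ch IH] path //=.
  by case=> _ [p_ge0 [_ ch_wf]]; apply: sumr_ge0 => i _; rewrite mulr_ge0 ?IH.
by case=> _ ch_wf; apply: sumr_ge0 => a _; rewrite mulr_ge0 ?IH ?(s_beh J).1.
Qed.

Fixpoint leaf_sum (path : seq nat) (t : tree) : R :=
  match t with
  | Leaf => u (rev path)
  | Chance n _ ch => \sum_(i < n) leaf_sum (nat_of_ord i :: path) (ch i)
  | Dec J ch => \sum_(a < nact J) leaf_sum (nat_of_ord a :: path) (ch a)
  end.

Lemma leaf_sum_ge0 path t : 0 <= leaf_sum path t.
Proof. by elim: t path => [|n p ch IH|J ch IH] path //=; apply: sumr_ge0. Qed.

Lemma EU_le_leaf_sum (s : strat) (t : tree) path :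
  behavioral s -> wf_tree t -> EU_from u s path t <= leaf_sum path t.
Proof.
have weight_le (w v x : R) : 0 <= w <= 1 -> v <= x -> 0 <= x -> w * v <= x.
  case/andP=> w_ge0 w_le1 le_vx x_ge0.
  by rewrite (le_trans (ler_wpM2l w_ge0 le_vx)) ?ler_piMl.
move=> s_beh; elim: t path => [|n p ch IH|J ch IH] path //=.
  case=> _ [p_ge0 [p_sum1 ch_wf]]; apply: ler_sum => i _.
  apply: weight_le; rewrite ?IH ?leaf_sum_ge0 ?p_ge0 //=.
  by rewrite -p_sum1 ler_sum_summand.
case=> _ ch_wf; have [s_ge0 s_sum1] := s_beh J; apply: ler_sum => a _.
apply: weight_le; rewrite ?IH ?leaf_sum_ge0 ?s_ge0 //=.
by rewrite -s_sum1 ler_sum_summand.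
Qed.

Definition set_pure (s : strat) (J : Inf) (b : 'I_(nact J)) : strat :=
  fun I => if I == J then pure b else s I.

Lemma behavioral_set_pure s J (b : 'I_(nact J)) :
  behavioral s -> behavioral (set_pure s b).
Proof.
move=> s_beh I; rewrite /set_pure; case: eqP => [->|_]; last exact: s_beh.
exact: pure_distribution.
Qed.

Definition bset_pure (x : bstrat) J (b : 'I_(nact J)) : bstrat :=
  exist _ (set_pure (sval x) b) (behavioral_set_pure b (svalP x)).

Lemma EU_set_pure_seen s J (b : 'I_(nact J)) seen t path :
  noAM_from seen t -> J \in seen ->
  EU_from u (set_pure s b) path t = EU_from u s path t.
Proof.
elim: t seen path => [|n p ch IH|K ch IH] seen path //=.
  by move=> ch_noAM J_seen; apply: eq_bigr => i _; rewrite (IH _ _ _ _ J_seen).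
case=> K_new ch_noAM J_seen; apply: eq_bigr => a _.
have /negbTE neq_KJ : K != J by apply: contraNneq K_new => ->.
rewrite {1}/set_pure neq_KJ (IH _ _ _ (ch_noAM a)) //.
by rewrite in_cons J_seen orbT.
Qed.

Lemma max_beta_gt0 (t : tree) : wf_tree t -> has_chance t -> (0 < max_beta t)%N.
Proof.
elim: t => [|n p ch IH|J ch IH] //=.
  case=> n_gt0 [_ [_ ch_wf]] _; apply: leq_trans (leq_maxl _ _).
  rewrite (bigD1 (Ordinal n_gt0)) //= (leq_trans _ (leq_addr _ _)) //.
  by case: ifP => // /IH; apply.
case=> _ ch_wf /existsP[a ch_a]; exact: leq_trans (IH a _ ch_a) (leq_bigmax a).
Qed.

Lemma max_branching_Dec J (ch : 'I_(nact J) -> tree) a :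
  wf_tree (Dec J ch) -> (max_branching (ch a) <= max_branching (Dec J ch))%N.
Proof.
case=> _ ch_wf; rewrite /max_branching /=.
case: ifP => [ch_a|_].
  by rewrite ifT ?leq_bigmax //; apply/existsP; exists a.
case: ifP => // /existsP[a' ch_a'].
exact: leq_trans (max_beta_gt0 (ch_wf a') ch_a') (leq_bigmax a').
Qed.

Definition covered (t : tree) (path : seq nat) (v : R) : Prop :=
  exists l : seq bstrat, (size l <= max_branching t)%N /\
    v <= \sum_(x <- l) EU_from u (sval x) path t.

Lemma EU_le_opt_value (s : strat) (t : tree) :
  behavioral s -> wf_tree t -> EU t u s <= opt_value t u.
Proof.
move=> s_beh t_wf; apply: ub_le_sup; last by exists s.
by exists (leaf_sum [::] t) => _ [s' [s'_beh ->]]; exact: EU_le_leaf_sum.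
Qed.

Lemma covered_le t path v w : v <= w -> covered t path w -> covered t path v.
Proof. by move=> le_vw [l [size_l le_w]]; exists l; split; last exact: le_trans le_w. Qed.

Lemma covered_Leaf path : covered Leaf path (u (rev path)).
Proof.
have [s s_beh] := behavioral_exists R nact_gt0.
by exists [:: exist _ s s_beh]; rewrite big_seq1.
Qed.

Lemma covered_Chance n p (ch : 'I_n -> tree) path (v : 'I_n -> R) :
  wf_tree (Chance n p ch) ->
  (forall i, covered (ch i) (nat_of_ord i :: path) (v i)) ->
  covered (Chance n p ch) path (\sum_i p i * v i).
Proof.
case=> _ [p_ge0 [_ ch_wf]] /choice[f f_cover].
exists (flatten [seq f i | i <- index_enum 'I_n]); split.
  rewrite size_flatten /shape -map_comp sumnE big_map /max_branching /=.
  by rewrite (leq_trans _ (leq_maxl _ _)) // leq_sum // => i _; case: (f_cover i).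
rewrite big_flatten big_map /=; apply: ler_sum => i _.
apply: (@le_trans _ _ (\sum_(x <- f i) p i * EU_from u (sval x) (nat_of_ord i :: path) (ch i))).
  by rewrite -big_distrr ler_wpM2l //; case: (f_cover i).
apply: ler_sum => x _; rewrite ler_sum_summand // => j.
exact: mulr_ge0 (p_ge0 j) (EU_ge0 _ (svalP x) (ch_wf j)).
Qed.

Lemma covered_Dec J (ch : 'I_(nact J) -> tree) (b : 'I_(nact J)) seen path w :
  wf_tree (Dec J ch) -> noAM_from seen (ch b) -> J \in seen ->
  covered (ch b) (nat_of_ord b :: path) w -> covered (Dec J ch) path w.
Proof.
move=> Dec_wf ch_noAM J_seen [l [size_l le_w]].
exists [seq bset_pure x b | x <- l]; split.
  by rewrite size_map (leq_trans size_l) ?max_branching_Dec.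
rewrite big_map; under eq_bigr => x _ do
  rewrite /= {1}/set_pure eqxx sum_pure (EU_set_pure_seen _ _ _ ch_noAM J_seen).
exact: le_w.
Qed.

Lemma covered_pr1 (t : tree) seen hist path
    (s' : forall K : Inf * seq (Inf * nat), 'I_(nact K.1) -> R) :
  behavioral s' -> wf_tree t -> noAM_from seen t ->
  covered t path (EU_from u s' path (pr1_from hist t)).
Proof.
move=> s'_beh; elim: t seen hist path => [|n p ch IH|J ch IH] seen hist path /=.
- by move=> _ _; exact: covered_Leaf.
- move=> Chance_wf ch_noAM; apply: covered_Chance => // i.
  by apply: IH; [exact: Chance_wf.2.2.2 | exact: ch_noAM].
- move=> [nact_J ch_wf] [J_new ch_noAM].
  pose V (a : 'I_(nact J)) :=
    EU_from u s' (nat_of_ord a :: path) (pr1_from (rcons hist (J, nat_of_ord a)) (ch a)).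
  have [b V_le] : exists b, forall a, V a <= V b.
    exists [arg max_(b > Ordinal nact_J) V b]%O.
    by case: arg_maxP => // b _ V_le a; apply: V_le.
  have [s'_ge0 s'_sum1] := s'_beh (J, hist).
  apply: (covered_le (convex_comb_le s'_ge0 s'_sum1 V_le)).
  apply: (covered_Dec (seen := J :: seen)) (ch_noAM b) (mem_head _ _) _ => //.
  exact: IH.
Qed.

End Refinement.

Theorem corollary4 (R : realType) (Inf : eqType) (nact : Inf -> nat)
  (Gamma : tree R Inf nact) :
  (forall I, (0 < nact I)%N) ->
  wf_tree Gamma ->
  no_absentmindedness Gamma ->
  forall u : seq nat -> R, (forall z, 0 <= u z) ->
  0 < opt_value Gamma u ->
  opt_value (pr1 Gamma) u / opt_value Gamma u <= (max_branching Gamma)%:R.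
Proof.
move=> nact_gt0 Gamma_wf Gamma_noAM u u_ge0 opt_gt0.
rewrite ler_pdivrMr // mulr_natl; apply: ge_sup.
  have [s' s'_beh] := @behavioral_exists R _ (fun K : Inf * seq (Inf * nat) => nact K.1)
    (fun K => nact_gt0 K.1).
  by exists (EU (pr1 Gamma) u s'), s'.
move=> _ [s' [s'_beh ->]].
have [l [size_l EU_le]] := covered_pr1 nact_gt0 u_ge0 [::] [::] s'_beh Gamma_wf Gamma_noAM.
apply: (le_trans EU_le); apply: (@le_trans _ _ (\sum_(x <- l) opt_value Gamma u)).
  by apply: ler_sum => x _; exact: EU_le_opt_value (svalP x) Gamma_wf.
by rewrite big_const_seq count_predT iter_addr_0 ler_pMn2l.
Qed.
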